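(* Let $(\mathscr{C},\mathbb{E},\mathfrak{s})$ be an extriangulated category such that for every object $A$ the morphism $A\to 0$ is an $\mathbb{E}$-inflation and $0\to A$ is an $\mathbb{E}$-deflation, and let $\Sigma$ and $\delta_Y$ be as in the context. Then for all objects $X,Y$ of $\mathscr{C}$, the map $\mathscr{C}(X,\Sigma Y)\to\mathbb{E}(X,Y)$, $\varepsilon\mapsto\varepsilon^*\delta_Y$, is a group isomorphism; in particular $\mathbf{E}^1(X,Y):=\mathscr{C}(X,\Sigma Y)\cong\mathbb{E}(X,Y)$.
   Context: An extriangulated category $(\mathscr{C},\mathbb{E},\mathfrak{s})$ is in the sense of Nakaoka–Palu: $\mathscr{C}$ additive, $\mathbb{E}\colon\mathscr{C}^{\mathrm{op}}\times\mathscr{C}\to Ab$ biadditive, $\mathfrak{s}$ an additive realisation assigning to $\delta\in\mathbb{E}(C,A)$ an equivalence class of sequences $[A\to B\to C]$, satisfying (ET1)–(ET4)$^{\mathrm{op}}$. For $a\colon A\to A'$ and $c\colon C'\to C$ write $a_*\delta=\mathbb{E}(C,a)(\delta)$ and $c^*\delta=\mathbb{E}(c,A)(\delta)$. A morphism $x\colon A\to B$ is an $\mathbb{E}$-inflation if $\mathfrak{s}(\delta)=[A\xrightarrow{x}B\to C]$ for some $\delta\in\mathbb{E}(C,A)$; dually for $\mathbb{E}$-deflations. For each object $Y$, $\Sigma Y$ is a chosen object with $\delta_Y\in\mathbb{E}(\Sigma Y,Y)$ such that $\mathfrak{s}(\delta_Y)=[Y\to 0\to\Sigma Y]$; for $f\colon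 X\to Y$, $\Sigma f$ is the unique morphism $\Sigma X\to\Sigma Y$ with $f_*\delta_X=(\Sigma f)^*\delta_Y$. *)

From HB Require Import structures.
From mathcomp Require Import all_boot all_algebra.
Set Implicit Arguments. Unset Strict Implicit. Unset Printing Implicit Defensive.
Import GRing.Theory.
Local Open Scope ring_scope.

Record AddCat := {
  Obj : Type;
  Mor : Obj -> Obj -> zmodType;
  idm : forall A, Mor A A;
  comp : forall A B C, Mor B C -> Mor A B -> Mor A C;
  compA : forall A B C D (h : Mor C D) (g : Mor B C) (f : Mor A B),
      comp h (comp g f) = comp (comp h g) f;
  comp1m : forall A B (f : Mor A B), comp (idm B) f = f;
  compm1 : forall A B (f : Mor A B), comp f (idm A) = f;
  comp_addl : forall A B C (g g' : Mor B C) (f : Mor A B),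
      comp (g + g') f = comp g f + comp g' f;
  comp_addr : forall A B C (g : Mor B C) (f f' : Mor A B),
      comp g (f + f') = comp g f + comp g f';
  (* zero object: its identity is the zero morphism *)
  zero : Obj;
  zero_id : idm zero = 0;
  bip : Obj -> Obj -> Obj;
  inl : forall A B, Mor A (bip A B);
  inr : forall A B, Mor B (bip A B);
  prl : forall A B, Mor (bip A B) A;
  prr : forall A B, Mor (bip A B) B;
  prl_inl : forall A B, comp (prl A B) (inl A B) = idm A;
  prr_inr : forall A B, comp (prr A B) (inr A B) = idm B;
  prl_inr : forall A B, comp (prl A B) (inr A B) = 0;
  prr_inl : forall A B, comp (prr A B) (inl A B) = 0;
  bip_id : forall A B, comp (inl A B) (prl A B) + comp (inr A B) (prr A B)
                       = idm (bip A B)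
}.

Arguments idm {a} A.
Arguments comp {a A B C}.
Arguments zero {a}.
Arguments bip {a}.
Arguments inl {a A B}.
Arguments inr {a A B}.
Arguments prl {a A B}.
Arguments prr {a A B}.

Definition is_iso (C : AddCat) (A B : Obj C) (b : Mor A B) : Prop :=
  exists b' : Mor B A, comp b' b = idm A /\ comp b b' = idm B.

Definition bimap (C : AddCat) (A A' B B' : Obj C) (f : Mor A B) (g : Mor A' B')
  : Mor (bip A A') (bip B B') :=
  comp inl (comp f prl) + comp inr (comp g prr).

(* The data (E, s): E(C,A) is [Ext C A] (contravariant in C, covariant in A);
   push a = a_* = E(C,a); pull c = c^* = E(c,A);
   real delta B x y  means  [A --x--> B --y--> C] belongs to the class s(delta). *)
Record ExtData (C : AddCat) := {
  Ext : Obj C -> Obj C -> zmodType;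
  push : forall (X A A' : Obj C), Mor A A' -> Ext X A -> Ext X A';
  pull : forall (X X' A : Obj C), Mor X' X -> Ext X A -> Ext X' A;
  real : forall (X A : Obj C), Ext X A -> forall B : Obj C, Mor A B -> Mor B X -> Prop
}.

Arguments Ext {C} e.
Arguments push {C e X A A'}.
Arguments pull {C e X X' A}.
Arguments real {C e X A} delta B.

Definition ext_sum (C : AddCat) (D : ExtData C) (X A X' A' : Obj C)
  (d : Ext D X A) (d' : Ext D X' A') : Ext D (bip X X') (bip A A') :=
  push inl (pull prl d) + push inr (pull prr d').

Definition ET1 (C : AddCat) (D : ExtData C) : Prop :=
  (forall X A A' (a : Mor A A') (d d' : Ext D X A), push a (d + d') = push a d + push a d')
  /\ (forall X X' A (c : Mor X' X) (d d' : Ext D X A), pull c (d + d') = pull c d + pull c d')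
  /\ (forall X A (d : Ext D X A), push (idm A) d = d)
  /\ (forall X A (d : Ext D X A), pull (idm X) d = d)
  /\ (forall X A A' A'' (a : Mor A A') (a' : Mor A' A'') (d : Ext D X A),
        push (comp a' a) d = push a' (push a d))
  /\ (forall X X' X'' A (c : Mor X' X) (c' : Mor X'' X') (d : Ext D X A),
        pull (comp c c') d = pull c' (pull c d))
  /\ (forall X X' A A' (a : Mor A A') (c : Mor X' X) (d : Ext D X A),
        push a (pull c d) = pull c (push a d))
  /\ (forall X A A' (a a' : Mor A A') (d : Ext D X A), push (a + a') d = push a d + push a' d)
  /\ (forall X X' A (c c' : Mor X' X) (d : Ext D X A), pull (c + c') d = pull c d + pull c' d).

Definition s_is_class (C : AddCat) (D : ExtData C) : Prop :=
  (forall X A (d : Ext D X A), exists B (x : Mor A B) (y : Mor B X), real d B x y)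
  /\ (forall X A (d : Ext D X A) B (x : Mor A B) (y : Mor B X) B' (x' : Mor A B') (y' : Mor B' X),
        real d B x y ->
        (real d B' x' y' <-> exists b : Mor B B', is_iso b /\ comp b x = x' /\ comp y' b = y)).

Definition ET2 (C : AddCat) (D : ExtData C) : Prop :=
  s_is_class D
  /\ (forall X A X' A' (d : Ext D X A) (d' : Ext D X' A') B (x : Mor A B) (y : Mor B X)
        B' (x' : Mor A' B') (y' : Mor B' X') (a : Mor A A') (c : Mor X X'),
        real d B x y -> real d' B' x' y' -> push a d = pull c d' ->
        exists b : Mor B B', comp b x = comp x' a /\ comp c y = comp y' b)
  /\ (forall X A, real (0 : Ext D X A) (bip A X) inl prr)
  /\ (forall X A X' A' (d : Ext D X A) (d' : Ext D X' A') B (x : Mor A B) (y : Mor B X)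
        B' (x' : Mor A' B') (y' : Mor B' X'),
        real d B x y -> real d' B' x' y' ->
        real (ext_sum d d') (bip B B') (bimap x x') (bimap y y')).

Definition ET3 (C : AddCat) (D : ExtData C) : Prop :=
  forall X A X' A' (d : Ext D X A) (d' : Ext D X' A') B (x : Mor A B) (y : Mor B X)
    B' (x' : Mor A' B') (y' : Mor B' X') (a : Mor A A') (b : Mor B B'),
    real d B x y -> real d' B' x' y' -> comp b x = comp x' a ->
    exists c : Mor X X', comp c y = comp y' b /\ push a d = pull c d'.

Definition ET3op (C : AddCat) (D : ExtData C) : Prop :=
  forall X A X' A' (d : Ext D X A) (d' : Ext D X' A') B (x : Mor A B) (y : Mor B X)
    B' (x' : Mor A' B') (y' : Mor B' X') (b : Mor B B') (c : Mor X X'),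
    real d B x y -> real d' B' x' y' -> comp c y = comp y' b ->
    exists a : Mor A A', comp b x = comp x' a /\ push a d = pull c d'.

Definition ET4 (C : AddCat) (D : ExtData C) : Prop :=
  forall (A B Dd X F : Obj C) (d : Ext D Dd A) (d' : Ext D F B)
    (f : Mor A B) (f' : Mor B Dd) (g : Mor B X) (g' : Mor X F),
    real d B f f' -> real d' X g g' ->
    exists (E : Obj C) (h' : Mor X E) (dd : Mor Dd E) (e : Mor E F) (d'' : Ext D E A),
      real d'' X (comp g f) h'
      /\ real (push f' d') E dd e
      /\ comp dd f' = comp h' g
      /\ comp e h' = g'
      /\ pull dd d'' = d
      /\ push f d'' = pull e d'.

Definition ET4op (C : AddCat) (D : ExtData C) : Prop :=
  forall (Dd A B F X : Obj C) (d : Ext D B Dd) (d' : Ext D X F)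
    (f' : Mor Dd A) (f : Mor A B) (g' : Mor F B) (g : Mor B X),
    real d A f' f -> real d' B g' g ->
    exists (E : Obj C) (dd : Mor Dd E) (e : Mor E F) (h' : Mor E A) (d'' : Ext D X E),
      real d'' A h' (comp g f)
      /\ real (pull g' d) E dd e
      /\ comp h' dd = f'
      /\ comp f h' = comp g' e
      /\ push e d'' = d'
      /\ push dd d = pull g d''.

Definition is_extriangulated (C : AddCat) (D : ExtData C) : Prop :=
  ET1 D /\ ET2 D /\ ET3 D /\ ET3op D /\ ET4 D /\ ET4op D.

Definition is_inflation (C : AddCat) (D : ExtData C) (A B : Obj C) (x : Mor A B) : Prop :=
  exists (X : Obj C) (d : Ext D X A) (y : Mor B X), real d B x y.

Definition is_deflation (C : AddCat) (D : ExtData C) (B X : Obj C) (y : Mor B X) : Prop :=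
  exists (A : Obj C) (d : Ext D X A) (x : Mor A B), real d B x y.

From Pilot Require Import Defs.
From HB Require Import structures.
From mathcomp Require Import all_boot all_algebra.
From Stdlib Require Import ClassicalEpsilon.
Set Implicit Arguments. Unset Strict Implicit. Unset Printing Implicit Defensive.
Import GRing.Theory.
Local Open Scope ring_scope.

(* If [Y --> 0 --> Sigma Y] realizes [delta_Y], the exact sequence
   [C(X, 0) --> C(X, Sigma Y) --> E(X, Y)] coming from (ET2) shows that
   [e |-> e^* delta_Y] has trivial kernel, and (ET3) applied to the morphism
   from any realization of [d] to [Y --> 0 --> Sigma Y] which is the identity
   on [Y] produces a preimage of [d]. The hypotheses that [A --> 0] is an
   inflation and [0 --> A] a deflation only guarantee that the [delta_Y]
   exist. *)

Lemma inj_surj_bijective (T U : Type) (f : T -> U) :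
  injective f -> (forall u, exists t, f t = u) -> bijective f.
Proof.
move=> f_inj f_surj.
pose g u := proj1_sig (constructive_indefinite_description _ (f_surj u)).
have gK : cancel g f by move=> u; rewrite /g; case: constructive_indefinite_description.
by exists g => [t|//]; apply: f_inj; rewrite gK.
Qed.

Lemma comp0m (C : AddCat) (A B B' : Obj C) (f : Mor A B) :
  Defs.comp (0 : Mor B B') f = 0.
Proof. by apply: (addIr (Defs.comp 0 f)); rewrite -comp_addl !add0r. Qed.

Section PullbackAlongZeroRealization.
Variables (C : AddCat) (D : ExtData C).
Hypotheses (ET1D : ET1 D) (ET2D : ET2 D) (ET3D : ET3 D).

Lemma push_id (X A : Obj C) (d : Ext D X A) : push (idm A) d = d.
Proof. by case: ET1D => _ [_ []]. Qed.

Definition pullback {X A X' : Obj C} (d : Ext D X A) : Mor X' X -> Ext D X' A :=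
  fun c => pull c d.

Lemma pullback_is_zmod_morphism (X A X' : Obj C) (d : Ext D X A) :
  zmod_morphism (@pullback X A X' d).
Proof.
have pull_addl : {morph @pullback X A X' d : c c' / c + c'}.
  by move=> c c'; case: ET1D => _ [_ [_ [_ [_ [_ [_ [_ pull_add]]]]]]]; apply: pull_add.
by move=> c c'; rewrite -{2}(subrK c' c) (pull_addl (c - c') c') addrK.
Qed.

HB.instance Definition _ (X A X' : Obj C) (d : Ext D X A) :=
  GRing.isZmodMorphism.Build _ _ (@pullback X A X' d) (pullback_is_zmod_morphism d).

Lemma pullback_eq0_factor (X A B X' : Obj C) (d : Ext D X A)
    (x : Mor A B) (y : Mor B X) (c : Mor X' X) :
  real d B x y -> pullback d c = 0 -> exists b : Mor X' B, c = Defs.comp y b.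
Proof.
move=> dxy dc0.
have [[_ _] [morph [split_real _]]] := ET2D.
have [b [_ yb]] := morph X' A X A 0 d _ Defs.inl prr B x y (idm A) c
  (split_real X' A) dxy (etrans (push_id 0) (esym dc0)).
exists (Defs.comp b Defs.inr).
by rewrite -(compm1 c) -(prr_inr A X') Defs.compA yb Defs.compA.
Qed.

Variables (X A : Obj C) (d : Ext D X A).
Hypothesis d_through_zero : real d zero 0 0.

Lemma pullback_inj (X' : Obj C) : injective (@pullback X A X' d).
Proof.
apply: raddf_inj => c /(pullback_eq0_factor d_through_zero) [b ->].
exact: comp0m.
Qed.

Lemma pullback_surj (X' : Obj C) (d' : Ext D X' A) :
  exists c : Mor X' X, pullback d c = d'.
Proof.
have [[realizable _] _] := ET2D.
have [B [x [y d'xy]]] := realizable X' A d'.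
have zero_square : Defs.comp (0 : Mor B zero) x = Defs.comp 0 (idm A).
  by rewrite !comp0m.
have [c [_ d'c]] := ET3D d'xy d_through_zero zero_square.
by exists c; rewrite /pullback -d'c push_id.
Qed.

End PullbackAlongZeroRealization.

Theorem lemma3p8 (C : AddCat) (D : ExtData C) (HD : is_extriangulated D)
  (Hinf : forall A : Obj C, is_inflation D (0 : Mor A zero))
  (Hdef : forall A : Obj C, is_deflation D (0 : Mor zero A))
  (Sigma : Obj C -> Obj C) (delta : forall Y : Obj C, Ext D (Sigma Y) Y)
  (Hdelta : forall Y : Obj C, real (delta Y) zero 0 0) :
  forall X Y : Obj C,
    (forall e1 e2 : Mor X (Sigma Y),
        pull (e1 + e2) (delta Y) = pull e1 (delta Y) + pull e2 (delta Y))
    /\ bijective (fun e : Mor X (Sigma Y) => pull e (delta Y)).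
Proof.
move=> X Y; have [ET1D [ET2D [ET3D _]]] := HD.
split; first exact: (raddfD (pullback (X' := X) (delta Y))).
apply: inj_surj_bijective.
  exact: (pullback_inj ET1D ET2D (Hdelta Y)).
exact: (pullback_surj ET1D ET2D ET3D (Hdelta Y)).
Qed.
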